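(* Let $A \subset \mathbb{Z}^d$ consist of exactly $d+2$ points, contain $0$, and generate $\mathbb{Z}^d$ additively. Denote the nonzero elements of $A$ by $v_0, v_1, \ldots, v_d$, where $v_1, \ldots, v_d$ are linearly independent. For integers $k$ let $C_k = \{\sum_{i=1}^d n_i v_i : n_i \in \mathbb{N}, \ \sum_{i=1}^d n_i \leq k\}$ (so $C_k = \emptyset$ for $k < 0$), and for integers $j, h \geq 0$ let $A_{j,h} = j v_0 + C_{h-j}$. Let $N$ be the order of $v_0$ in the finite group $\mathbb{Z}^d / \mathrm{span}_{\mathbb{Z}}\{v_1,\ldots,v_d\}$. Let $h \geq 0$ and let $I \subseteq \{0,1,\ldots,h\}$ be a nonempty set all of whose elements are congruent modulo $N$, with $m = \min I$ and $M = \max I$. Then \[ \bigcap_{j \in I} A_{j,h} = A_{m,h} \cap A_{M,h}. \]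
   Context: $\mathbb{N} = \{0,1,2,\ldots\}$; for a vector $x$ and set $S$, $x + S = \{x + s : s \in S\}$. *)

From HB Require Import structures.
From mathcomp Require Import all_boot all_order all_algebra.
Set Implicit Arguments. Unset Strict Implicit. Unset Printing Implicit Defensive.
Import Order.TTheory GRing.Theory Num.Theory.
Local Open Scope ring_scope.

(* Points are labelled v : 'I_d.+1 -> 'rV[int]_d with v ord0 = v_0 and
   v (lift ord0 i) = v_(i+1) for i : 'I_d. *)

Definition in_span_tail (d : nat) (v : 'I_d.+1 -> 'rV[int]_d) (x : 'rV[int]_d) : Prop :=
  exists c : 'I_d -> int, x = \sum_(i < d) (v (lift ord0 i)) *~ c i.

Definition is_order_mod_span (d : nat) (v : 'I_d.+1 -> 'rV[int]_d) (N : nat) : Prop :=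
  (0 < N)%N /\ in_span_tail v ((v ord0) *+ N) /\
  forall n : nat, (0 < n)%N -> (n < N)%N -> ~ in_span_tail v ((v ord0) *+ n).

Definition Cset (d : nat) (v : 'I_d.+1 -> 'rV[int]_d) (k : int) (x : 'rV[int]_d) : Prop :=
  exists n : 'I_d -> nat,
    ((\sum_(i < d) n i)%:Z <= k) /\ x = \sum_(i < d) (v (lift ord0 i)) *+ n i.

Definition Aset (d : nat) (v : 'I_d.+1 -> 'rV[int]_d) (j h : nat) (x : 'rV[int]_d) : Prop :=
  exists y, Cset v (h%:Z - j%:Z) y /\ x = (v ord0) *+ j + y.

From HB Require Import structures.
From mathcomp Require Import all_boot all_order all_algebra.
From mathcomp Require Import zify ring lra.
Set Implicit Arguments. Unset Strict Implicit. Unset Printing Implicit Defensive.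
Import Order.TTheory GRing.Theory Num.Theory.
Local Open Scope ring_scope.

(* Write N v_0 = sum_i c_i v_i, j = m + p N and M = m + q N with p <= q.  If
   x = m v_0 + sum_i a_i v_i = M v_0 + sum_i b_i v_i with a, b in the simplices
   C_(h-m), C_(h-M), independence of v_1, ..., v_d forces a = b + q c.  Then
   x = j v_0 + sum_i (a_i - p c_i) v_i, and both constraints on these
   coefficients (a_i - p c_i >= 0 and sum_i (a_i - p c_i) <= h - m - p N) are
   comparisons of affine functions of p that hold at p = 0 and p = q, hence at
   every p in between. *)

Lemma ler_affine_between (R : realDomainType) (x y s t p q : R) :
  0 <= p -> p <= q -> x <= y -> x - s * q <= y - t * q -> x - s * p <= y - t * p.
Proof.
move=> p_ge0 le_pq le_xy le_q.
have [q_gt0|q_le0] := ltrP 0 q; last first.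
  have -> : p = 0 by apply/le_anti; rewrite p_ge0 (le_trans le_pq q_le0).
  by rewrite !mulr0 !subr0.
rewrite -subr_le0 -(pmulr_rle0 _ q_gt0).
have -> : q * (x - s * p - (y - t * p)) =
          (q - p) * (x - y) + p * (x - s * q - (y - t * q)) by ring.
nra.
Qed.

Lemma sumrz_inj (V : zmodType) (n : nat) (w : 'I_n -> V) (f g : 'I_n -> int) :
  (forall c : 'I_n -> int, \sum_(i < n) w i *~ c i = 0 -> forall i, c i = 0) ->
  \sum_(i < n) w i *~ f i = \sum_(i < n) w i *~ g i -> f =1 g.
Proof.
move=> w_indep eq_fg i; apply/eqP; rewrite -subr_eq0; apply/eqP.
apply: (w_indep (fun i => f i - g i)).
by under eq_bigr do rewrite mulrzBr; rewrite sumrB eq_fg subrr.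
Qed.

Lemma eqmod_addmul (N m j : nat) :
  (m <= j)%N -> j = m %[mod N] -> exists p, j = (m + p * N)%N.
Proof.
move=> le_mj /eqP; rewrite eqn_mod_dvd // => /dvdnP[p eq_p].
by exists p; rewrite -eq_p subnKC.
Qed.

Section LayerIntersection.

Variables (d : nat) (v : 'I_d.+1 -> 'rV[int]_d).

Local Notation w i := (v (lift ord0 i)).

Lemma AsetP j h x :
  Aset v j h x <->
  exists a : 'I_d -> int, [/\ forall i, 0 <= a i, \sum_(i < d) a i <= h%:Z - j%:Z
                            & x = v ord0 *+ j + \sum_(i < d) w i *~ a i].
Proof.
split.
  case=> _ [[n [le_n ->]] ->]; exists (fun i => (n i)%:Z); split=> //.
    by rewrite (big_morph Posz PoszD (erefl _)) in le_n.
case=> a [a_ge0 le_a ->]; exists (\sum_(i < d) w i *~ a i); split=> //.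
exists (fun i => `|a i|%N); split.
  by rewrite (big_morph Posz PoszD (erefl _)); under eq_bigr do rewrite gez0_abs //.
by apply: eq_bigr => i _; rewrite pmulrn gez0_abs.
Qed.

Hypothesis w_indep :
  forall c : 'I_d -> int, \sum_(i < d) w i *~ c i = 0 -> forall i, c i = 0.

Variables (N : nat) (c : 'I_d -> int).

Hypothesis v0_order : v ord0 *+ N = \sum_(i < d) w i *~ c i.

Lemma v0_mulrn_span p : v ord0 *+ (p * N) = \sum_(i < d) w i *~ (c i * p%:Z).
Proof.
by under eq_bigr do rewrite mulrzA; rewrite -mulrz_suml -v0_order -pmulrn -mulrnA mulnC.
Qed.

Lemma Aset_between m h p q x : (p <= q)%N ->
  Aset v m h x -> Aset v (m + q * N) h x -> Aset v (m + p * N) h x.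
Proof.
move=> le_pq /AsetP[a [a_ge0 le_a ->]] /AsetP[b [b_ge0 le_b eq_x]].
have a_eq : forall i, a i = b i + c i * q%:Z.
  apply: (sumrz_inj (g := fun i => b i + c i * q%:Z) w_indep).
  under [RHS]eq_bigr do rewrite mulrzDr.
  apply: (addrI (v ord0 *+ m)); rewrite eq_x big_split /= addrC -v0_mulrn_span.
  by rewrite mulrnDr addrA.
have sum_a : \sum_(i < d) a i = \sum_(i < d) b i + (\sum_(i < d) c i) * q%:Z.
  by rewrite mulr_suml -big_split; apply: eq_bigr => i _; rewrite a_eq.
have le_pqZ : p%:Z <= q%:Z by rewrite lez_nat.
apply/AsetP; exists (fun i => a i - c i * p%:Z); split.
- move=> i.
  have a_ge0_at_q : 0 - 0 * q%:Z <= a i - c i * q%:Z by rewrite a_eq addrK mul0r subr0.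
  by have := ler_affine_between (le0z_nat p) le_pqZ (a_ge0 i) a_ge0_at_q; rewrite mul0r subr0.
- rewrite sumrB -mulr_suml.
  have sum_le_at_q : \sum_(i < d) a i - (\sum_(i < d) c i) * q%:Z <= h%:Z - m%:Z - N%:Z * q%:Z.
    by rewrite sum_a addrK; apply: (le_trans le_b); lia.
  by apply: le_trans (ler_affine_between (le0z_nat p) le_pqZ le_a sum_le_at_q) _; lia.
- rewrite mulrnDr -addrA v0_mulrn_span -big_split /=.
  by congr (_ + _); apply: eq_bigr => i _; rewrite -mulrzDr addrC subrK.
Qed.

End LayerIntersection.

Theorem lemma6p1 (d : nat) (v : 'I_d.+1 -> 'rV[int]_d)
  (* A = {0, v_0, ..., v_d} has exactly d+2 points *)
  (v_inj : injective v) (v_nz : forall i, v i != 0)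
  (* A generates Z^d additively *)
  (A_gen : forall x : 'rV[int]_d, exists c : 'I_d.+1 -> int, x = \sum_(i < d.+1) (v i) *~ c i)
  (* v_1, ..., v_d linearly independent *)
  (v_indep : forall c : 'I_d -> int,
      \sum_(i < d) (v (lift ord0 i)) *~ c i = 0 -> forall i, c i = 0)
  (N : nat) (HN : is_order_mod_span v N)
  (h : nat) (I : {set 'I_h.+1}) (I_nonempty : I != set0)
  (I_cong : forall i j, i \in I -> j \in I -> (nat_of_ord i = nat_of_ord j %[mod N])%N)
  (m M : 'I_h.+1) (m_in : m \in I) (M_in : M \in I)
  (m_min : forall i, i \in I -> (m <= i)%N) (M_max : forall i, i \in I -> (i <= M)%N) :
  forall x : 'rV[int]_d,
    (forall j, j \in I -> Aset v j h x) <-> (Aset v m h x /\ Aset v M h x).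
Proof.
move=> x; split=> [inI | [Am AM] j jI]; first by split; apply: inI.
case: HN => N_gt0 [[c v0_order] _].
have [p eq_j] := eqmod_addmul (m_min j jI) (I_cong j m jI m_in).
have [q eq_M] := eqmod_addmul (m_min M M_in) (I_cong M m M_in m_in).
have le_pq : (p <= q)%N.
  by rewrite -(leq_pmul2r N_gt0) -(leq_add2l m) -eq_j -eq_M M_max.
rewrite eq_M in AM; rewrite eq_j.
exact: (Aset_between v_indep v0_order le_pq Am AM).
Qed.
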